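(* Let $\mathbb F_\infty$ have free basis $x_1,x_2,\dots$. Every $S$-invariant subgroup of $\mathbb F_\infty$ that contains the commutator $x_1x_2x_1^{-1}x_2^{-1}$ is fully characteristic, i.e. invariant under every endomorphism of $\mathbb F_\infty$.
   Context: $S\subseteq\mathrm{End}(\mathbb F_\infty)$ is the subsemigroup generated by: (i) for every $n$ and indices $i(1),\dots,i(n)$, the endomorphism $x_k\mapsto x_{i(k)}$ ($k\le n$), $x_k\mapsto x_k$ ($k>n$); (ii) for every $i$, the endomorphism $x_k\mapsto x_i^{-1}x_k$ for all $k$; (iii) for every $k$, the endomorphism $x_k\mapsto e$ fixing all other $x_j$; (iv) the endomorphism $x_k\mapsto x_k^{-1}$ for all $k$; (v) all inner automorphisms. A subgroup $H$ is $S$-invariant if $\phi(H)\subseteq H$ for all $\phi\in S$. *)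

(* The free group F_infty on generators x_1, x_2, ...
   is modelled as reduced words over letters (i, b) : nat * bool, where
   (i, false) stands for x_{i+1} and (i, true) for x_{i+1}^{-1}
   (0-based indexing of the basis). *)
From mathcomp Require Import all_boot.
Set Implicit Arguments. Unset Strict Implicit. Unset Printing Implicit Defensive.

Definition letter := (nat * bool)%type.
Definition word := seq letter.

Definition linv (a : letter) : letter := (a.1, ~~ a.2).

Fixpoint reduced (w : word) : bool :=
  match w with
  | a :: ((b :: _) as w') => (b != linv a) && reduced w'
  | _ => true
  end.

Definition cons_red (a : letter) (w : word) : word :=
  match w with
  | b :: w' => if b == linv a then w' else a :: w
  | [::] => [:: a]
  end.

Lemma reduced_tail (a : letter) (w : word) : reduced (a :: w) -> reduced w.
Proof. by case: w => [|b w] //= /andP []. Qed.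

Lemma reduced_cons_red a w : reduced w -> reduced (cons_red a w).
Proof.
case: w => [|b w] //= Hw.
case: ifP => Hb; first exact: (reduced_tail Hw).
by rewrite /= Hb Hw.
Qed.

Definition wmul (u v : word) : word := foldr cons_red v u.

Lemma reduced_wmul u v : reduced v -> reduced (wmul u v).
Proof. by elim: u => [|a u IH] //= Hv; apply: reduced_cons_red; apply: IH. Qed.

(* inverse word: prepend linv of each letter in turn (left to right),
   giving linv a_n ... linv a_1 (no cancellation occurs on reduced input) *)
Definition winv (u : word) : word := foldl (fun acc a => cons_red (linv a) acc) [::] u.

Lemma reduced_winv u : reduced (winv u).
Proof.
rewrite /winv; have : reduced [::] by [].
elim: u [::] => [|a u IH] acc //= Hacc.
by apply: IH; apply: reduced_cons_red.
Qed.

Definition FG := {w : word | reduced w}.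

Definition one : FG := exist _ [::] isT.
Definition mul (u v : FG) : FG :=
  exist _ (wmul (proj1_sig u) (proj1_sig v)) (reduced_wmul (proj1_sig u) (proj2_sig v)).
Definition inv (u : FG) : FG :=
  exist _ (winv (proj1_sig u)) (reduced_winv (proj1_sig u)).
Definition gen (i : nat) : FG := exist _ [:: (i, false)] isT.

Definition is_endo (phi : FG -> FG) : Prop :=
  forall u v, phi (mul u v) = mul (phi u) (phi v).

Definition subst (f : nat -> FG) (w : FG) : FG :=
  foldr (fun a acc => mul (if a.2 then inv (f a.1) else f a.1) acc) one (proj1_sig w).

Definition is_subgroup (H : FG -> Prop) : Prop :=
  [/\ H one, (forall u v, H u -> H v -> H (mul u v)) & (forall u, H u -> H (inv u))].

Inductive S_gen : (FG -> FG) -> Prop :=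
  | S_gen_i (n : nat) (idx : nat -> nat) :
      S_gen (subst (fun k => if k < n then gen (idx k) else gen k))
  | S_gen_ii (i : nat) : S_gen (subst (fun k => mul (inv (gen i)) (gen k)))
  | S_gen_iii (k : nat) : S_gen (subst (fun j => if j == k then one else gen j))
  | S_gen_iv : S_gen (subst (fun k => inv (gen k)))
  | S_gen_v (g : FG) : S_gen (fun w => mul (mul g w) (inv g)).

Inductive inS : (FG -> FG) -> Prop :=
  | inS_gen phi : S_gen phi -> inS phi
  | inS_comp phi psi : inS phi -> inS psi -> inS (fun w => phi (psi w)).

Definition S_invariant (H : FG -> Prop) : Prop :=
  forall phi, inS phi -> forall h, H h -> H (phi h).

Definition fully_characteristic (H : FG -> Prop) : Prop :=
  forall phi, is_endo phi -> forall h, H h -> H (phi h).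

Definition comm12 : FG := mul (mul (mul (gen 0) (gen 1)) (inv (gen 0))) (inv (gen 1)).

(* The inner automorphisms lie in S, so H is normal; the renamings of
   type (i) carry [x_1, x_2] to every commutator [x_i, x_j] of generators,
   and normality spreads this to every commutator [u, v].  Hence F_infty / H
   is abelian.  An endomorphism phi is the substitution x_i |-> f_i := phi x_i,
   and modulo a normal subgroup with abelian quotient a substitution is
   multiplicative in f.  A word h only involves finitely many generators, so
   modulo H the image phi h is the product, over the generators x_k of h, of
   the substitutions sending x_k to f_k and killing all other generators.  Each of these lies in H: by
   multiplicativity it suffices to treat f_k = x_j, and then the substitution
   is a renaming (type (i)) followed by a deletion (type (iii)), i.e. in S. *)
From Pilot Require Import Defs.
From mathcomp Require Import all_boot.
(* Re-import so that [mul], [inv], [one] refer to F_infty, not to the monoid library. *)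
Import Pilot.Defs.
Set Implicit Arguments. Unset Strict Implicit. Unset Printing Implicit Defensive.

Local Notation "u ** v" := (mul u v) (at level 40, left associativity).

Lemma FG_eq (u v : FG) : proj1_sig u = proj1_sig v -> u = v.
Proof.
case: u => s Hs; case: v => t Ht /= E; subst t.
by rewrite (bool_irrelevance Hs Ht).
Qed.

Lemma linvK (a : letter) : linv (linv a) = a.
Proof. by case: a => i b; rewrite /linv /= negbK. Qed.

Lemma cons_redK (a : letter) (w : word) :
  reduced w -> cons_red a (cons_red (linv a) w) = w.
Proof.
case: w => [|b w] /=; first by rewrite eqxx.
rewrite !linvK; case: (eqVneq b a) => [->|Hb] Hr; last by rewrite /= eqxx.
by case: w Hr => [|c w] //= /andP [Hc _]; rewrite (negbTE Hc).
Qed.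

Lemma cons_red_reduced (a : letter) (w : word) :
  reduced (a :: w) -> cons_red a w = a :: w.
Proof. by case: w => [|b w] //= /andP [Hb _]; rewrite (negbTE Hb). Qed.

Lemma wmul_cons_red (a : letter) (x w : word) : reduced w ->
  wmul (cons_red a x) w = cons_red a (wmul x w).
Proof.
move=> Hw; case: x => [|b x] //=; case: ifP => [/eqP ->|] //=.
by rewrite cons_redK //; apply: reduced_wmul.
Qed.

Lemma wmulA (u v w : word) : reduced v -> reduced w ->
  wmul (wmul u v) w = wmul u (wmul v w).
Proof. by move=> Hv Hw; elim: u => [|a u IH] //=; rewrite wmul_cons_red // IH. Qed.

Lemma wmul_nil (w : word) : reduced w -> wmul w [::] = w.
Proof.
elim: w => [|a w IH] //= Hr.
by rewrite IH ?(reduced_tail Hr) // cons_red_reduced.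
Qed.

Lemma winvE (u : word) : winv u = wmul (rev (map linv u)) [::].
Proof.
rewrite /winv; move: [::]; elim: u => [|a u IH] acc //=.
by rewrite IH rev_cons -cats1 /wmul foldr_cat.
Qed.

Lemma wmul_invK (u w : word) : reduced w -> wmul u (wmul (rev (map linv u)) w) = w.
Proof.
elim: u w => [|a u IH] w Hw //=.
rewrite rev_cons -cats1 /wmul foldr_cat /=.
by rewrite [foldr _ _ u]IH ?cons_redK // reduced_cons_red.
Qed.

Lemma wmul_Kinv (u w : word) : reduced w -> wmul (rev (map linv u)) (wmul u w) = w.
Proof.
move=> Hw; have := wmul_invK (rev (map linv u)) Hw.
by rewrite map_rev revK -map_comp (eq_map linvK) map_id.
Qed.

Lemma mulA (u v w : FG) : u ** v ** w = u ** (v ** w).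
Proof. case: u v w => [u Hu] [v Hv] [w Hw]; apply: FG_eq => /=; exact: wmulA. Qed.

Lemma mul1g (u : FG) : one ** u = u.
Proof. by apply: FG_eq. Qed.

Lemma mulg1 (u : FG) : u ** one = u.
Proof. case: u => [u Hu]; apply: FG_eq => /=; exact: wmul_nil. Qed.

Lemma mulgV (u : FG) : u ** inv u = one.
Proof. apply: FG_eq => /=; rewrite winvE; exact: wmul_invK. Qed.

Lemma mulVg (u : FG) : inv u ** u = one.
Proof.
case: u => [u Hu]; apply: FG_eq => /=; rewrite winvE wmulA //.
by rewrite /= -{2}(wmul_nil Hu) wmul_Kinv.
Qed.

Lemma mulKg (u v : FG) : inv u ** (u ** v) = v.
Proof. by rewrite -mulA mulVg mul1g. Qed.

Lemma mulKVg (u v : FG) : u ** (inv u ** v) = v.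
Proof. by rewrite -mulA mulgV mul1g. Qed.

Lemma inv_uniq (u v : FG) : u ** v = one -> v = inv u.
Proof. by move=> E; rewrite -(mulKg u v) E mulg1. Qed.

Lemma invK (u : FG) : inv (inv u) = u.
Proof. by symmetry; apply: inv_uniq; rewrite mulVg. Qed.

Lemma invM (u v : FG) : inv (u ** v) = inv v ** inv u.
Proof. by symmetry; apply: inv_uniq; rewrite mulA mulKVg mulgV. Qed.

Lemma inv1 : inv one = one.
Proof. by symmetry; apply: inv_uniq; rewrite mulg1. Qed.

Ltac gsimpl :=
  rewrite ?(invM, invK, inv1, mulA, mulKg, mulKVg, mulgV, mulVg, mulg1, mul1g).

Definition img (f : nat -> FG) (a : letter) : FG := if a.2 then inv (f a.1) else f a.1.

Definition substw (f : nat -> FG) (s : word) : FG :=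
  foldr (fun a acc => img f a ** acc) one s.

Lemma img_linv (f : nat -> FG) (a : letter) : img f (linv a) = inv (img f a).
Proof. by case: a => i [|]; rewrite /img /= ?invK. Qed.

Lemma substw_cons_red (f : nat -> FG) (a : letter) (w : word) :
  substw f (cons_red a w) = img f a ** substw f w.
Proof.
case: w => [|b w] //=; case: ifP => [/eqP ->|] //=.
by rewrite img_linv mulKVg.
Qed.

Lemma substw_wmul (f : nat -> FG) (u v : word) :
  substw f (wmul u v) = substw f u ** substw f v.
Proof.
elim: u => [|a u IH] /=; first by rewrite mul1g.
by rewrite substw_cons_red IH mulA.
Qed.

Lemma subst_endo (f : nat -> FG) : is_endo (subst f).
Proof. by move=> u v; exact: substw_wmul. Qed.

Lemma subst_gen (f : nat -> FG) (i : nat) : subst f (gen i) = f i.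
Proof. by rewrite /subst /= /img /= mulg1. Qed.

Lemma endo_one (phi : FG -> FG) : is_endo phi -> phi one = one.
Proof.
move=> Hphi; have := Hphi one one; rewrite mul1g => E.
by rewrite -(mulKg (phi one) (phi one)) -E mulVg.
Qed.

Lemma endo_inv (phi : FG -> FG) (u : FG) : is_endo phi -> phi (inv u) = inv (phi u).
Proof. by move=> Hphi; apply: inv_uniq; rewrite -Hphi mulgV endo_one. Qed.

Lemma subst_inv (f : nat -> FG) (u : FG) : subst f (inv u) = inv (subst f u).
Proof. exact: endo_inv (subst_endo f). Qed.

Lemma endo_eq_subst (phi : FG -> FG) (w : FG) :
  is_endo phi -> phi w = subst (fun i => phi (gen i)) w.
Proof.
move=> Hphi; case: w => s Hs; elim: s Hs => [|a s IH] Hs.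
  have -> : (exist _ [::] Hs : FG) = one by apply: FG_eq.
  by rewrite endo_one.
have Hs' := reduced_tail Hs.
have -> : (exist _ (a :: s) Hs : FG) = img gen a ** (exist _ s Hs' : FG).
  by apply: FG_eq; case: a Hs => i [|] Hs /=; rewrite cons_red_reduced.
rewrite Hphi IH subst_endo; congr (_ ** _).
by case: a {Hs} => i [|]; rewrite /img /= ?subst_inv subst_gen ?endo_inv.
Qed.

Lemma gen_ind (P : FG -> Prop) :
  P one -> (forall u v, P u -> P v -> P (u ** v)) -> (forall u, P u -> P (inv u)) ->
  (forall i, P (gen i)) -> forall u, P u.
Proof.
move=> P1 PM PV PG u.
rewrite (@endo_eq_subst id u (fun _ _ => erefl)) /subst.
elim: (proj1_sig u) => [|a s IH] //=.
by apply: PM => //; rewrite /img; case: ifP => _; auto.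
Qed.

Lemma subst_agree (f g : nat -> FG) (w : FG) :
  (forall a, a \in proj1_sig w -> f a.1 = g a.1) -> subst f w = subst g w.
Proof.
rewrite /subst; elim: (proj1_sig w) => [|a s IH] //= E.
rewrite /img E ?mem_head // IH // => b Hb; apply: E.
by rewrite in_cons Hb orbT.
Qed.

Lemma subst_ext (f g : nat -> FG) (w : FG) : f =1 g -> subst f w = subst g w.
Proof. by move=> E; apply: subst_agree => a _; apply: E. Qed.

Lemma subst_comp (f g : nat -> FG) (w : FG) :
  subst g (subst f w) = subst (fun i => subst g (f i)) w.
Proof.
have Hgf : is_endo (fun w => subst g (subst f w)) by move=> u v; rewrite !subst_endo.
by rewrite (endo_eq_subst w Hgf); apply: subst_ext => i; rewrite subst_gen.
Qed.

Lemma subst_one (w : FG) : subst (fun _ => one) w = one.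
Proof.
rewrite /subst; elim: (proj1_sig w) => [|a s IH] //=.
by rewrite IH /img; case: (a.2); rewrite ?inv1 mulg1.
Qed.

Definition bnd (s : word) : nat := foldr (fun a m => maxn a.1.+1 m) 0 s.

Lemma bndP (s : word) (a : letter) : a \in s -> a.1 < bnd s.
Proof.
elim: s => [|b s IH] //=; rewrite in_cons => /orP [/eqP ->|H].
  by rewrite leq_max leqnn.
by rewrite leq_max IH ?orbT.
Qed.

Definition trunc (f : nat -> FG) (m : nat) : nat -> FG :=
  fun i => if i < m then f i else one.

Definition single (k : nat) (u : FG) : nat -> FG :=
  fun i => if i == k then u else one.

Lemma subst_bnd (f : nat -> FG) (w : FG) :
  subst f w = subst (trunc f (bnd (proj1_sig w))) w.
Proof. by apply: subst_agree => a Ha; rewrite /trunc bndP. Qed.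

Lemma truncS (f : nat -> FG) (m : nat) :
  trunc f m.+1 =1 fun i => trunc f m i ** single m (f m) i.
Proof.
move=> i; rewrite /trunc /single; case: (ltngtP i m) => Hi.
- by rewrite ltnS ltnW // mulg1.
- by rewrite ltnNge Hi mulg1.
- by rewrite -Hi ltnSn mul1g.
Qed.

Lemma single_mul (k : nat) (u v : FG) :
  single k (u ** v) =1 fun i => single k u i ** single k v i.
Proof. by move=> i; rewrite /single; case: ifP; rewrite ?mulg1. Qed.

Lemma single_inv (k : nat) (u : FG) : single k (inv u) =1 fun i => inv (single k u i).
Proof. by move=> i; rewrite /single; case: ifP; rewrite ?inv1. Qed.

Definition cm (u v : FG) : FG := u ** v ** inv u ** inv v.
Definition conj (g x : FG) : FG := g ** x ** inv g.

Definition normal (H : FG -> Prop) : Prop := forall g h, H h -> H (conj g h).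

Definition abelian_quotient (H : FG -> Prop) : Prop :=
  [/\ is_subgroup H, normal H & forall u v, H (cm u v)].

Lemma cmM (a b v : FG) : cm (a ** b) v = conj a (cm b v) ** cm a v.
Proof. by rewrite /cm /conj; gsimpl. Qed.

Lemma cmV (a v : FG) : cm (inv a) v = conj (inv a) (inv (cm a v)).
Proof. by rewrite /cm /conj; gsimpl. Qed.

Lemma cmC (u v : FG) : cm u v = inv (cm v u).
Proof. by rewrite /cm; gsimpl. Qed.

Lemma normal_cm_ind (H : FG -> Prop) (v : FG) : is_subgroup H -> normal H ->
  (forall i, H (cm (gen i) v)) -> forall u, H (cm u v).
Proof.
move=> [H1 HM HV] HN Hgen; apply: gen_ind => //.
- by rewrite /cm; gsimpl.
- by move=> a b Ha Hb; rewrite cmM; apply: HM => //; apply: HN.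
- by move=> a Ha; rewrite cmV; apply: HN; apply: HV.
Qed.

Lemma normal_abelian_quotient (H : FG -> Prop) : is_subgroup H -> normal H ->
  (forall i j, H (cm (gen i) (gen j))) -> abelian_quotient H.
Proof.
move=> HG HN Hgen; split=> // u v; apply: normal_cm_ind => // i.
have [_ _ HV] := HG; rewrite cmC; apply: HV.
exact: normal_cm_ind.
Qed.

Section CongruenceModulo.

Variable H : FG -> Prop.
Hypothesis HA : abelian_quotient H.

Definition eqmod (u v : FG) : Prop := H (u ** inv v).

Lemma eqmod_refl (u : FG) : eqmod u u.
Proof. by case: HA => [[H1 _ _] _ _]; rewrite /eqmod mulgV. Qed.

Lemma eqmod_sym (u v : FG) : eqmod u v -> eqmod v u.
Proof. by case: HA => [[_ _ HV] _ _] /HV; rewrite /eqmod; gsimpl. Qed.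

Lemma eqmod_trans (u v w : FG) : eqmod u v -> eqmod v w -> eqmod u w.
Proof.
by case: HA => [[_ HM _] _ _] E1 E2; have := HM _ _ E1 E2; rewrite /eqmod; gsimpl.
Qed.

Lemma eqmod_mul (u u' v v' : FG) : eqmod u u' -> eqmod v v' -> eqmod (u ** v) (u' ** v').
Proof.
case: HA => [[_ HM _] HN _] E1 E2; rewrite /eqmod.
have -> : u ** v ** inv (u' ** v') = conj u (v ** inv v') ** (u ** inv u').
  by rewrite /conj; gsimpl.
by apply: HM => //; apply: HN.
Qed.

Lemma eqmod_comm (u v : FG) : eqmod (u ** v) (v ** u).
Proof.
case: HA => [_ _ HK]; rewrite /eqmod.
have -> : u ** v ** inv (v ** u) = cm u v by rewrite /cm; gsimpl.
exact: HK.
Qed.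

Lemma eqmod_mem (x y : FG) : eqmod x y -> H y -> H x.
Proof.
case: HA => [[_ HM _] _ _] E Hy.
have -> : x = x ** inv y ** y by gsimpl.
exact: HM.
Qed.

Lemma substw_mulf (f g : nat -> FG) (s : word) :
  eqmod (substw (fun i => f i ** g i) s) (substw f s ** substw g s).
Proof.
elim: s => [|a s IH] /=; first by rewrite mul1g; apply: eqmod_refl.
have Eimg : eqmod (img (fun i => f i ** g i) a) (img f a ** img g a).
  by case: a => i [|]; rewrite /img /= ?invM; [apply: eqmod_comm | apply: eqmod_refl].
set If := img f a; set Ig := img g a; set Sf := substw f s; set Sg := substw g s.
apply: (eqmod_trans (v := (If ** Ig) ** (Sf ** Sg))); first exact: eqmod_mul.
have -> : If ** Ig ** (Sf ** Sg) = If ** ((Ig ** Sf) ** Sg) by rewrite !mulA.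
have -> : If ** Sf ** (Ig ** Sg) = If ** ((Sf ** Ig) ** Sg) by rewrite !mulA.
by apply: eqmod_mul; [apply: eqmod_refl | apply: eqmod_mul; [apply: eqmod_comm |
  apply: eqmod_refl]].
Qed.

Lemma subst_mulf (f g : nat -> FG) (w : FG) :
  eqmod (subst (fun i => f i ** g i) w) (subst f w ** subst g w).
Proof. exact: substw_mulf. Qed.

Lemma subst_invf (f : nat -> FG) (w : FG) :
  eqmod (subst (fun i => inv (f i)) w) (inv (subst f w)).
Proof.
have E := subst_mulf (fun i => inv (f i)) f w.
rewrite (subst_ext _ (g := fun _ => one)) ?subst_one in E; last by move=> i; rewrite mulVg.
by move: (eqmod_sym E); rewrite /eqmod; gsimpl.
Qed.

End CongruenceModulo.

Lemma S_normal (H : FG -> Prop) : S_invariant H -> normal H.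
Proof. by move=> HS g h Hh; apply: (HS _ (inS_gen (S_gen_v g))). Qed.

(* The renaming x_1 |-> x_i, x_2 |-> x_j carries [x_1, x_2] to [x_i, x_j]. *)
Lemma S_cm_gen (H : FG -> Prop) : S_invariant H -> H comm12 ->
  forall i j, H (cm (gen i) (gen j)).
Proof.
move=> HS Hc i j.
have := HS _ (inS_gen (S_gen_i 2 (fun k => if k == 0 then i else j))) _ Hc.
by rewrite /comm12 !subst_endo !subst_inv !subst_gen.
Qed.

Lemma S_abelian_quotient (H : FG -> Prop) :
  is_subgroup H -> S_invariant H -> H comm12 -> abelian_quotient H.
Proof.
move=> HG HS Hc; apply: normal_abelian_quotient => //.
- exact: S_normal.
- exact: S_cm_gen.
Qed.

Section InvariantSubgroup.

Variables (H : FG -> Prop) (h : FG).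
Hypotheses (HS : S_invariant H) (HA : abelian_quotient H) (Hh : H h).

(* x_k |-> x_j, others |-> e, is on h the renaming (i) sending x_k to x_j
   and the other variables of h to x_(j+1), followed by deleting x_(j+1). *)
Lemma subst_single_gen (k j : nat) : H (subst (single k (gen j)) h).
Proof.
pose rename i := if i == k then j else j.+1.
have Hpsi := HS (inS_comp (inS_gen (S_gen_iii j.+1))
  (inS_gen (S_gen_i (bnd (proj1_sig h)) rename))) Hh.
move: Hpsi; rewrite /= subst_comp (subst_agree (g := single k (gen j))) // => a Ha.
rewrite bndP // /rename /single; case: (a.1 == k); rewrite subst_gen ?eqxx //.
by rewrite ltn_eqF.
Qed.

(* By multiplicativity modulo H, the generator case extends to any value. *)
Lemma subst_single (k : nat) (u : FG) : H (subst (single k u) h).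
Proof.
case: (HA) => [[H1 HM HV] _ _]; elim/gen_ind: u.
- by rewrite (subst_ext _ (g := fun _ => one)) ?subst_one // => i; rewrite /single; case: ifP.
- move=> u v Hu Hv; rewrite (subst_ext _ (single_mul k u v)).
  by apply: (eqmod_mem HA (subst_mulf HA _ _ _)); apply: HM.
- move=> u Hu; rewrite (subst_ext _ (single_inv k u)).
  by apply: (eqmod_mem HA (subst_invf HA _ _)); apply: HV.
- exact: subst_single_gen.
Qed.

(* Modulo H, a truncated substitution is the product of single ones. *)
Lemma subst_trunc (f : nat -> FG) (m : nat) : H (subst (trunc f m) h).
Proof.
case: (HA) => [[H1 HM _] _ _]; elim: m => [|m IH].
  by rewrite (subst_ext _ (g := fun _ => one)) ?subst_one.
rewrite (subst_ext _ (truncS f m)).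
by apply: (eqmod_mem HA (subst_mulf HA _ _ _)); apply: HM => //; apply: subst_single.
Qed.

End InvariantSubgroup.

Theorem mainTheorem11 (H : FG -> Prop) :
  is_subgroup H -> S_invariant H -> H comm12 -> fully_characteristic H.
Proof.
move=> HG HS Hc phi Hphi h Hh.
have HA := S_abelian_quotient HG HS Hc.
rewrite (endo_eq_subst h Hphi) subst_bnd.
exact: subst_trunc.
Qed.
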